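(* Consider the general load coupling model with JT described in the context. Let $\bm\kappa,\bm\kappa'\in\{0,1\}^{n\times m}$ be JT patterns such that, for some cell $i$ and UE $j$, $\kappa_{ij}=0$, $\kappa'_{ij}=1$, and $\kappa'_{hl}=\kappa_{hl}$ for all $(h,l)\neq(i,j)$. Then for all $\bm{x}\in\mathbb{R}^n_{\ge 0}$, componentwise, $\bm{f}^{\bm\kappa}\big(\bm{h}^{\bm{\kappa'}}(\bm{x})\big)\leq\min\left\{\bm{f}^{\bm\kappa}\big(\bm{h}^{\bm\kappa}(\bm{x})\big),\ \bm{f}^{\bm{\kappa'}}\big(\bm{h}^{\bm{\kappa'}}(\bm{x})\big)\right\}$.
   Context: There are $n$ cells and $m$ UEs. Cell $i$ has transmit power per resource block $p_i>0$, $g_{ij}>0$ is the channel gain between cell $i$ and UE $j$, $d_j>0$ is the (normalized) bitrate demand of UE $j$, and $\sigma^2>0$ is the noise power. A JT pattern is a matrix $\bm\kappa\in\{0,1\}^{n\times m}$, where $\kappa_{ij}=1$ means cell $i$ serves UE $j$; every UE is assumed to be served by at least one cell. For a pattern $\bm\kappa$, the cell load function $\bm f^{\bm\kappa}=(f^{\bm\kappa}_1,\dots,f^{\bm\kappa}_n)$ and SINR function $\bm h^{\bm\kappa}=(h^{\bm\kappa}_1,\dots,h^{\bm\kappa}_m)$ are $f_i^{\bm{\kappa}}(\bm{\gamma})=\sum_{j=1}^{m}\frac{\kappa_{ij}d_j}{\log_2\left(1+\gamma_j\right)}$, $\quad h_j^{\bm{\kappa}}(\bm{x})=\frac{\sum_{i=1}^{n}p_ig_{ij}\kappa_{ij}}{\sum_{k=1}^{n}p_kg_{kj}x_{k}(1-\kappa_{kj})+\sigma^2}$,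 for $\bm\gamma\in\mathbb{R}^m_{>0}$ and $\bm x\in\mathbb{R}^n_{\ge0}$. Inequalities and $\min$ between vectors are componentwise. *)

(* R : realType, cells 'I_n, UEs 'I_m. *)
From HB Require Import structures.
From mathcomp Require Import all_boot all_order all_algebra.
From mathcomp Require Import reals exp.
Set Implicit Arguments. Unset Strict Implicit. Unset Printing Implicit Defensive.
Import Order.TTheory GRing.Theory Num.Theory.
Local Open Scope ring_scope.

Definition log2 {R : realType} (x : R) : R := ln x / ln 2.

Definition load_f {R : realType} {n m : nat} (kappa : 'I_n -> 'I_m -> bool)
  (d : 'I_m -> R) (gamma : 'I_m -> R) (i : 'I_n) : R :=
  \sum_(j < m) ((kappa i j)%:R * d j) / log2 (1 + gamma j).

Definition sinr_h {R : realType} {n m : nat} (kappa : 'I_n -> 'I_m -> bool)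
  (p : 'I_n -> R) (g : 'I_n -> 'I_m -> R) (sigma2 : R)
  (x : 'I_n -> R) (j : 'I_m) : R :=
  (\sum_(i < n) p i * g i j * (kappa i j)%:R) /
  (\sum_(k < n) p k * g k j * x k * (1 - (kappa k j)%:R) + sigma2).

From HB Require Import structures.
From mathcomp Require Import all_boot all_order all_algebra.
From mathcomp Require Import reals exp.
Import Order.TTheory GRing.Theory Num.Theory.
Local Open Scope ring_scope.

(* Adding the link (i0, j0) only enlarges the pattern, kappa <= kappa'.  A
   larger pattern moves interferers into the signal, so every SINR grows,
   h^kappa <= h^kappa'; the load f^kappa is antitone in the SINR, which gives
   f^kappa (h^kappa') <= f^kappa (h^kappa).  And at a fixed SINR a larger
   pattern only adds nonnegative terms to each cell load, which gives
   f^kappa (h^kappa') <= f^kappa' (h^kappa'). *)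

Set Implicit Arguments.
Unset Strict Implicit.

Section LoadCoupling.

Variables (R : realType) (n m : nat).

Lemma log2_gt0 (a : R) : 1 < a -> 0 < log2 a.
Proof. by move=> a1; rewrite /log2 divr_gt0 ?ln_gt0 ?ltr1n. Qed.

Lemma log2_ge0 (a : R) : 1 <= a -> 0 <= log2 a.
Proof. by move=> a1; rewrite /log2 divr_ge0 ?ln_ge0 ?ler1n. Qed.

Lemma ler_log2 (a b : R) : 0 < a -> a <= b -> log2 a <= log2 b.
Proof.
move=> a0 ab; have b0 : 0 < b by apply: lt_le_trans ab.
by rewrite /log2 ler_pM2r ?invr_gt0 ?ln_gt0 ?ltr1n // ler_ln ?posrE.
Qed.

Lemma ler_bool_nat (a b : bool) : (a -> b) -> (a%:R : R) <= b%:R.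
Proof. by case: a; case: b => // /(_ isT). Qed.

Lemma subr_bool_ge0 (b : bool) : 0 <= 1 - (b%:R : R).
Proof. by case: b; rewrite ?subrr ?subr0. Qed.

Variables (d : 'I_m -> R) (kappa kappa' : 'I_n -> 'I_m -> bool).
Hypothesis d_ge0 : forall j, 0 <= d j.

Lemma load_f_antitone (gamma gamma' : 'I_m -> R) i :
  (forall j, 0 < gamma j) -> (forall j, gamma j <= gamma' j) ->
  load_f kappa d gamma' i <= load_f kappa d gamma i.
Proof.
move=> gamma_gt0 le_gamma; apply: ler_sum => j _.
have gamma'_gt0 : 0 < gamma' j by apply: lt_le_trans (le_gamma j).
apply: ler_wpM2l; first by rewrite mulr_ge0 ?ler0n.
rewrite lef_pV2 ?posrE ?log2_gt0 ?ltrDl // ler_log2 ?lerD2l //.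
by rewrite ltr_wpDr ?ltW.
Qed.

Lemma load_f_pattern_mono (gamma : 'I_m -> R) i :
  (forall i j, kappa i j -> kappa' i j) -> (forall j, 0 <= gamma j) ->
  load_f kappa d gamma i <= load_f kappa' d gamma i.
Proof.
move=> le_kappa gamma_ge0; apply: ler_sum => j _.
apply: ler_wpM2r; first by rewrite invr_ge0 log2_ge0 ?lerDl.
by apply: ler_wpM2r; [exact: d_ge0 | exact: ler_bool_nat (le_kappa i j)].
Qed.

Variables (p : 'I_n -> R) (g : 'I_n -> 'I_m -> R) (sigma2 : R) (x : 'I_n -> R).
Hypotheses (p_gt0 : forall i, 0 < p i) (g_gt0 : forall i j, 0 < g i j).
Hypotheses (sigma2_gt0 : 0 < sigma2) (x_ge0 : forall k, 0 <= x k).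

Let pg_ge0 i j : 0 <= p i * g i j.
Proof. by rewrite mulr_ge0 // ltW. Qed.

Let signal_ge0 (k : 'I_n -> 'I_m -> bool) j :
  0 <= \sum_(i < n) p i * g i j * (k i j)%:R.
Proof. by apply: sumr_ge0 => i _; rewrite mulr_ge0 ?pg_ge0 ?ler0n. Qed.

Let noise_gt0 (k : 'I_n -> 'I_m -> bool) j :
  0 < \sum_(i < n) p i * g i j * x i * (1 - (k i j)%:R) + sigma2.
Proof.
rewrite ltr_wpDl //; apply: sumr_ge0 => i _.
by rewrite mulr_ge0 ?subr_bool_ge0 // mulr_ge0 ?pg_ge0.
Qed.

Lemma sinr_h_ge0 (k : 'I_n -> 'I_m -> bool) j : 0 <= sinr_h k p g sigma2 x j.
Proof. by rewrite /sinr_h divr_ge0 ?signal_ge0 // ltW. Qed.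

Lemma sinr_h_gt0 (k : 'I_n -> 'I_m -> bool) j :
  (exists i, k i j) -> 0 < sinr_h k p g sigma2 x j.
Proof.
case=> i kij; rewrite /sinr_h divr_gt0 // (bigD1 i) //= kij mulr1.
rewrite ltr_pwDl ?mulr_gt0 ?p_gt0 ?g_gt0 //.
by apply: sumr_ge0 => l _; rewrite mulr_ge0 ?pg_ge0 ?ler0n.
Qed.

Lemma sinr_h_pattern_mono j :
  (forall i, kappa i j -> kappa' i j) ->
  sinr_h kappa p g sigma2 x j <= sinr_h kappa' p g sigma2 x j.
Proof.
move=> le_kappa; rewrite /sinr_h.
apply: ler_pM.
- exact: signal_ge0.
- by rewrite invr_ge0 ltW.
- apply: ler_sum => i _; rewrite ler_wpM2l ?pg_ge0 //.
  exact: ler_bool_nat (le_kappa i).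
- rewrite lef_pV2 ?posrE // lerD2r; apply: ler_sum => i _.
  apply: ler_wpM2l; first by rewrite mulr_ge0 ?pg_ge0.
  rewrite lerD2l lerN2.
  exact: ler_bool_nat (le_kappa i).
Qed.

End LoadCoupling.

Unset Implicit Arguments.

Theorem lemma3 (R : realType) (n m : nat)
  (p : 'I_n -> R) (g : 'I_n -> 'I_m -> R) (d : 'I_m -> R) (sigma2 : R)
  (kappa kappa' : 'I_n -> 'I_m -> bool) (i0 : 'I_n) (j0 : 'I_m)
  (Hp : forall i, 0 < p i) (Hg : forall i j, 0 < g i j)
  (Hd : forall j, 0 < d j) (Hsigma : 0 < sigma2)
  (Hserved : forall j, exists i, kappa i j)
  (Hserved' : forall j, exists i, kappa' i j)
  (Hk0 : kappa i0 j0 = false) (Hk1 : kappa' i0 j0 = true)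
  (Hsame : forall h l, (h, l) <> (i0, j0) -> kappa' h l = kappa h l)
  (x : 'I_n -> R) (Hx : forall k, 0 <= x k) :
  forall i : 'I_n,
    load_f kappa d (sinr_h kappa' p g sigma2 x) i
    <= Num.min (load_f kappa d (sinr_h kappa p g sigma2 x) i)
               (load_f kappa' d (sinr_h kappa' p g sigma2 x) i).
Proof.
have d_ge0 j : 0 <= d j by exact: ltW.
have le_kappa h l : kappa h l -> kappa' h l.
  case: (eqVneq (h, l) (i0, j0)) => [[-> ->]|ne]; first by rewrite Hk0.
  by rewrite Hsame //; apply/eqP.
have h_gt0 j : 0 < sinr_h kappa p g sigma2 x j by exact: sinr_h_gt0.
have h_ge0 j : 0 <= sinr_h kappa' p g sigma2 x j by exact: sinr_h_ge0.
have h_le j : sinr_h kappa p g sigma2 x j <= sinr_h kappa' p g sigma2 x j.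
  by apply: sinr_h_pattern_mono => // k; apply: le_kappa.
move=> i; rewrite le_min.
rewrite (load_f_antitone kappa d_ge0 i h_gt0 h_le).
by rewrite (load_f_pattern_mono d_ge0 i le_kappa h_ge0).
Qed.
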